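(* Let $(G,\cdot,D,\star)$ be an invariant probabilistic metric group with identity $e$, where $\star$ is sup-continuous. Then $Lip^1_\star(G,\Delta^+)$ is closed under $\odot$, and $(Lip^1_\star(G,\Delta^+),\odot)$ is a monoid with identity element $\delta_e$. Moreover, the map $\delta:(G,\cdot)\to(Lip^1_\star(G,\Delta^+),\odot)$, $a\mapsto\delta_a$, is an injective homomorphism.
   Context: A distribution function is a nondecreasing, left-continuous function $F:[-\infty,+\infty]\to[0,1]$ with $F(-\infty)=0$, $F(+\infty)=1$; $\Delta^+$ is the set of distribution functions with $F(0)=0$, ordered pointwise; $(\Delta^+,\le)$ is a complete lattice with maximum $\mathcal H_0$ ($\mathcal H_0(t)=0$ for $t\le0$, $1$ for $t>0$). A triangle function is a binary operation $\star$ on $\Delta^+$ that is commutative, associative, nondecreasing in each argument, with $F\star\mathcal H_0=F$; it is sup-continuous if $\sup_{i\in I}(F_i\star L)=(\sup_{i\in I}F_i)\star L$ for every nonempty family $(F_i)$ and every $L$. A probabilistic metric space $(G,D,\star)$ consists of a set $G$, a triangle function $\star$ and $D:G\times G\to\Delta^+$ with (i) $D(p,q)=\mathcal H_0$ iff $p=q$; (ii) $D(p,q)=D(q,p)$; (iii) $D(p,q)\star D(q,r)\le D(p,r)$. If $(G,\cdot)$ is a group and $D(pr,qr)=D(rp,rq)=D(p,q)$ for all $p,q,r$, it is an invariant probabilistic metric group. $Lip^1_\star(G,\Delta^+)$ is the set of maps $f:G\to\Delta^+$ with $D(x,y)\star f(y)\le f(x)$ for all $x,y$. $\delta_a(y)=D(y,a)$.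 For maps $f,g:G\to\Delta^+$, $(f\odot g)(x)=\sup_{y,z\in G,\ yz=x}f(y)\star g(z)$. *)

From Stdlib Require Import Reals Lra Classical ClassicalEpsilon.
Open Scope R_scope.

(* Distribution functions in Delta^+ (Schweizer--Sklar convention).
   F(-oo) = 0 and F(+oo) = 1 are fixed by convention and not stored;
   we store the restriction of F to the real line, which must be
   [0,1]-valued, nondecreasing, left-continuous on R, and vanish on (-oo,0]. *)
Record Dplus : Type := MkDplus {
  df :> R -> R;
  df_range : forall t, 0 <= df t <= 1;
  df_mono : forall s t, s <= t -> df s <= df t;
  df_lcont : forall t eps, 0 < eps ->
      exists delta, 0 < delta /\
        forall s, t - delta < s < t -> Rabs (df s - df t) < eps;
  df_zero : forall t, t <= 0 -> df t = 0
}.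

Definition H0_fun (t : R) : R := if Rle_dec t 0 then 0 else 1.

Lemma H0_range : forall t, 0 <= H0_fun t <= 1.
Proof. intro t; unfold H0_fun; destruct (Rle_dec t 0); lra. Qed.

Lemma H0_mono : forall s t, s <= t -> H0_fun s <= H0_fun t.
Proof.
  intros s t H; unfold H0_fun; destruct (Rle_dec s 0), (Rle_dec t 0); lra.
Qed.

Lemma H0_lcont : forall t eps, 0 < eps ->
  exists delta, 0 < delta /\
    forall s, t - delta < s < t -> Rabs (H0_fun s - H0_fun t) < eps.
Proof.
  intros t eps He. destruct (Rle_dec t 0) as [Ht|Ht].
  - exists 1; split; [lra|]. intros s Hs. unfold H0_fun.
    destruct (Rle_dec s 0); destruct (Rle_dec t 0); try lra.
    rewrite Rminus_diag, Rabs_R0; lra.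
  - exists t; split; [lra|]. intros s Hs. unfold H0_fun.
    destruct (Rle_dec s 0); destruct (Rle_dec t 0); try lra.
    rewrite Rminus_diag, Rabs_R0; lra.
Qed.

Lemma H0_zero : forall t, t <= 0 -> H0_fun t = 0.
Proof. intros t H; unfold H0_fun; destruct (Rle_dec t 0); lra. Qed.

Definition H0 : Dplus := MkDplus H0_fun H0_range H0_mono H0_lcont H0_zero.

Definition Dle (F G : Dplus) : Prop := forall t, F t <= G t.

Definition is_supD (A : Dplus -> Prop) (S : Dplus) : Prop :=
  (forall F, A F -> Dle F S) /\
  (forall U, (forall F, A F -> Dle F U) -> Dle S U).

(* The supremum in the complete lattice (Delta^+, <=), as a definite
   description (it always exists; the default H0 is never used). *)
Definition supD (A : Dplus -> Prop) : Dplus :=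
  epsilon (inhabits H0) (is_supD A).

Definition triangle_function (star : Dplus -> Dplus -> Dplus) : Prop :=
  (forall F G, star F G = star G F) /\
  (forall F G K, star (star F G) K = star F (star G K)) /\
  (forall F F' G, Dle F F' -> Dle (star F G) (star F' G)) /\
  (forall F G G', Dle G G' -> Dle (star F G) (star F G')) /\
  (forall F, star F H0 = F).

(* sup (F_i * L) = (sup F_i) * L for every nonempty family; stated for the
   family through its (nonempty) set of members. *)
Definition sup_continuous (star : Dplus -> Dplus -> Dplus) : Prop :=
  forall (A : Dplus -> Prop) (L : Dplus), (exists F, A F) ->
    supD (fun K => exists F, A F /\ K = star F L) = star (supD A) L.

Definition is_group {G : Type} (mul : G -> G -> G) (inv : G -> G) (e : G) : Prop :=
  (forall x y z, mul (mul x y) z = mul x (mul y z)) /\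
  (forall x, mul e x = x) /\ (forall x, mul x e = x) /\
  (forall x, mul (inv x) x = e) /\ (forall x, mul x (inv x) = e).

Definition pm_space {G : Type} (D : G -> G -> Dplus) (star : Dplus -> Dplus -> Dplus) : Prop :=
  triangle_function star /\
  (forall p q, D p q = H0 <-> p = q) /\
  (forall p q, D p q = D q p) /\
  (forall p q r, Dle (star (D p q) (D q r)) (D p r)).

Definition invariant {G : Type} (mul : G -> G -> G) (D : G -> G -> Dplus) : Prop :=
  forall p q r, D (mul p r) (mul q r) = D p q /\ D (mul r p) (mul r q) = D p q.

Definition Lip1 {G : Type} (D : G -> G -> Dplus) (star : Dplus -> Dplus -> Dplus)
  (f : G -> Dplus) : Prop :=
  forall x y, Dle (star (D x y) (f y)) (f x).

Definition delta {G : Type} (D : G -> G -> Dplus) (a : G) : G -> Dplus :=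
  fun y => D y a.

Definition odot {G : Type} (mul : G -> G -> G) (star : Dplus -> Dplus -> Dplus)
  (f g : G -> Dplus) : G -> Dplus :=
  fun x => supD (fun K => exists y z, mul y z = x /\ K = star (f y) (g z)).

(* The sup-convolution is a "max-plus" product of maps G -> Delta^+, with the
   triangle function playing the role of addition.  Sup-continuity lets a star
   with a supremum be pushed inside it, which gives associativity; reading the
   product through the opposite group exchanges left and right, so each
   two-sided statement only needs one side.  Invariance of D rewrites
   D(y, e) as D(yz, z), so that the Lipschitz condition of f is literally the
   inequality delta_e (.) f <= f, and the triangle inequality through az makes
   delta a homomorphism. *)

From Stdlib Require Import Reals Lra ClassicalEpsilon FunctionalExtensionality
  ProofIrrelevance.
Open Scope R_scope.

Lemma Dplus_eq (F K : Dplus) : (forall t, F t = K t) -> F = K.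
Proof.
  destruct F as [f r m l z], K as [f' r' m' l' z']; simpl; intro Hff'.
  assert (f = f') as <- by (apply functional_extensionality; exact Hff').
  f_equal; apply proof_irrelevance.
Qed.

Lemma Dle_refl (F : Dplus) : Dle F F.
Proof. intro t; lra. Qed.

Lemma Dle_trans (F K L : Dplus) : Dle F K -> Dle K L -> Dle F L.
Proof. intros H1 H2 t; specialize (H1 t); specialize (H2 t); lra. Qed.

Lemma Dle_antisym (F K : Dplus) : Dle F K -> Dle K F -> F = K.
Proof.
  intros H1 H2; apply Dplus_eq; intro t; specialize (H1 t); specialize (H2 t); lra.
Qed.

Section PointwiseSup.

Variable A : Dplus -> Prop.
Hypothesis A_inhabited : exists F, A F.

Let values (t : R) (r : R) : Prop := exists F, A F /\ r = F t.

Lemma values_bound (t : R) : bound (values t).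
Proof. exists 1; intros r [F [_ ->]]; apply (df_range F). Qed.

Lemma values_inhabited (t : R) : exists r, values t r.
Proof. destruct A_inhabited as [F HF]; exists (F t), F; auto. Qed.

Definition psup (t : R) : R :=
  proj1_sig (completeness _ (values_bound t) (values_inhabited t)).

Lemma psup_is_lub (t : R) : is_lub (values t) (psup t).
Proof. unfold psup; destruct completeness; assumption. Qed.

Lemma psup_ub (F : Dplus) (t : R) : A F -> F t <= psup t.
Proof. intro HF; apply (proj1 (psup_is_lub t)); exists F; auto. Qed.

Lemma psup_least (t u : R) : (forall F, A F -> F t <= u) -> psup t <= u.
Proof. intro Hu; apply (proj2 (psup_is_lub t)); intros r [F [HF ->]]; auto. Qed.

Lemma psup_approx (t eps : R) : 0 < eps -> exists F, A F /\ psup t - eps < F t.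
Proof.
  intro Heps; apply not_all_not_ex; intro Hnone.
  assert (psup t <= psup t - eps); [|lra].
  apply psup_least; intros F HF; specialize (Hnone F).
  apply Rnot_lt_le; intro Hlt; apply Hnone; auto.
Qed.

Lemma psup_range (t : R) : 0 <= psup t <= 1.
Proof.
  destruct A_inhabited as [F HF]; split.
  - apply Rle_trans with (F t); [apply df_range | apply psup_ub; auto].
  - apply psup_least; intros K _; apply df_range.
Qed.

Lemma psup_mono (s t : R) : s <= t -> psup s <= psup t.
Proof.
  intro Hst; apply psup_least; intros F HF.
  apply Rle_trans with (F t); [apply df_mono; auto | apply psup_ub; auto].
Qed.

Lemma psup_lcont (t eps : R) : 0 < eps ->
  exists delta, 0 < delta /\ forall s, t - delta < s < t -> Rabs (psup s - psup t) < eps.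
Proof.
  intro Heps.
  destruct (psup_approx t (eps / 2)) as [F [HF HFt]]; [lra|].
  destruct (df_lcont F t (eps / 2)) as [d [Hd HFcont]]; [lra|].
  exists d; split; [exact Hd|]; intros s Hs.
  specialize (HFcont s Hs); apply Rabs_def2 in HFcont.
  pose proof (psup_ub F s HF); pose proof (psup_mono s t (Rlt_le _ _ (proj2 Hs))).
  apply Rabs_def1; lra.
Qed.

Lemma psup_zero (t : R) : t <= 0 -> psup t = 0.
Proof.
  intro Ht; apply Rle_antisym; [|apply psup_range].
  apply psup_least; intros F _; rewrite (df_zero F t Ht); lra.
Qed.

Definition Dpsup : Dplus := MkDplus psup psup_range psup_mono psup_lcont psup_zero.

Lemma Dpsup_is_sup : is_supD A Dpsup.
Proof.
  split.
  - intros F HF t; apply psup_ub; auto.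
  - intros U HU t; apply psup_least; intros F HF; apply HU; auto.
Qed.

End PointwiseSup.

Definition Dzero : Dplus.
Proof.
  refine (MkDplus (fun _ => 0) _ _ _ _); intros; try lra.
  exists 1; split; [lra|]; intros; rewrite Rminus_diag, Rabs_R0; lra.
Defined.

Lemma supD_exists (A : Dplus -> Prop) : exists S, is_supD A S.
Proof.
  destruct (classic (exists F, A F)) as [HA|HA].
  - exists (Dpsup A HA); apply Dpsup_is_sup.
  - exists Dzero; split.
    + intros F HF; exfalso; eauto.
    + intros U _ t; apply (df_range U).
Qed.

Lemma supD_ub (A : Dplus -> Prop) (F : Dplus) : A F -> Dle F (supD A).
Proof. apply (proj1 (epsilon_spec _ _ (supD_exists A))). Qed.

Lemma supD_least (A : Dplus -> Prop) (U : Dplus) :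
  (forall F, A F -> Dle F U) -> Dle (supD A) U.
Proof. apply (proj2 (epsilon_spec _ _ (supD_exists A))). Qed.

Section Odot.

Variables (G : Type) (mul : G -> G -> G) (star : Dplus -> Dplus -> Dplus).

Lemma odot_ub (f g : G -> Dplus) (x y z : G) :
  mul y z = x -> Dle (star (f y) (g z)) (odot mul star f g x).
Proof. intro Hyz; apply supD_ub; exists y, z; auto. Qed.

Lemma odot_least (f g : G -> Dplus) (x : G) (U : Dplus) :
  (forall y z, mul y z = x -> Dle (star (f y) (g z)) U) ->
  Dle (odot mul star f g x) U.
Proof. intro HU; apply supD_least; intros K [y [z [Hyz ->]]]; auto. Qed.

Variable e : G.
Hypothesis mulg1 : forall x, mul x e = x.
Hypothesis star_sup_continuous : sup_continuous star.

Lemma star_odot_least (f g : G -> Dplus) (x : G) (L U : Dplus) :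
  (forall y z, mul y z = x -> Dle (star (star (f y) (g z)) L) U) ->
  Dle (star (odot mul star f g x) L) U.
Proof.
  intro HU; unfold odot; rewrite <- star_sup_continuous.
  - apply supD_least; intros K [F [[y [z [Hyz ->]]] ->]]; auto.
  - exists (star (f x) (g e)), x, e; auto.
Qed.

Hypothesis mulA : forall x y z, mul (mul x y) z = mul x (mul y z).
Hypothesis starA : forall F K L, star (star F K) L = star F (star K L).
Hypothesis star_monor : forall F K K', Dle K K' -> Dle (star F K) (star F K').

Lemma odot_assoc_le (f g h : G -> Dplus) (x : G) :
  Dle (odot mul star (odot mul star f g) h x) (odot mul star f (odot mul star g h) x).
Proof.
  apply odot_least; intros y z Hyz; apply star_odot_least; intros u v Huv.
  rewrite starA; apply Dle_trans with (star (f u) (odot mul star g h (mul v z))).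
  - apply star_monor, odot_ub; reflexivity.
  - apply odot_ub; rewrite <- mulA, Huv; exact Hyz.
Qed.

End Odot.

Section LeftUnit.

Variables (G : Type) (mul : G -> G -> G) (e : G).
Variables (D : G -> G -> Dplus) (star : Dplus -> Dplus -> Dplus).
Hypothesis mul1g : forall x, mul e x = x.
Hypothesis D_mulr : forall p q r, D (mul p r) (mul q r) = D p q.
Hypothesis D_refl : forall p, D p p = H0.
Hypothesis star1 : forall F, star H0 F = F.

Lemma odot_delta_l (f : G -> Dplus) :
  Lip1 D star f -> odot mul star (delta D e) f = f.
Proof.
  intro Hf; apply functional_extensionality; intro x; apply Dle_antisym.
  - apply odot_least; intros y z <-; unfold delta.
    rewrite <- (D_mulr y e z), mul1g; apply Hf.
  - rewrite <- (star1 (f x)), <- (D_refl e).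
    exact (odot_ub _ _ _ (delta D e) f x e x (mul1g x)).
Qed.

End LeftUnit.

Lemma odot_opp (G : Type) (mul : G -> G -> G) (star : Dplus -> Dplus -> Dplus)
  (starC : forall F K, star F K = star K F) (f g : G -> Dplus) :
  odot mul star f g = odot (fun x y => mul y x) star g f.
Proof.
  apply functional_extensionality; intro x; apply Dle_antisym.
  - apply odot_least; intros y z Hyz; rewrite starC; apply odot_ub; exact Hyz.
  - apply odot_least; intros z y Hyz; rewrite starC; apply odot_ub; exact Hyz.
Qed.

Section MetricGroup.

Variables (G : Type) (mul : G -> G -> G) (inv : G -> G) (e : G).
Variables (D : G -> G -> Dplus) (star : Dplus -> Dplus -> Dplus).
Hypothesis Hgrp : is_group mul inv e.
Hypothesis Hpm : pm_space D star.
Hypothesis Hinv : invariant mul D.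
Hypothesis Hsup : sup_continuous star.

Lemma mulA x y z : mul (mul x y) z = mul x (mul y z).
Proof. apply Hgrp. Qed.

Lemma mul1g x : mul e x = x.
Proof. apply Hgrp. Qed.

Lemma mulg1 x : mul x e = x.
Proof. apply Hgrp. Qed.

Lemma mulgKV x y : mul (mul x (inv y)) y = x.
Proof. rewrite mulA, (proj1 (proj2 (proj2 (proj2 Hgrp)))); apply mulg1. Qed.

Lemma starC F K : star F K = star K F.
Proof. apply Hpm. Qed.

Lemma starA F K L : star (star F K) L = star F (star K L).
Proof. apply Hpm. Qed.

Lemma star_monol F F' K : Dle F F' -> Dle (star F K) (star F' K).
Proof. apply Hpm. Qed.

Lemma star_monor F K K' : Dle K K' -> Dle (star F K) (star F K').
Proof. apply Hpm. Qed.

Lemma starH0 F : star F H0 = F.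
Proof. apply Hpm. Qed.

Lemma H0star F : star H0 F = F.
Proof. rewrite starC; apply starH0. Qed.

Lemma D_refl p : D p p = H0.
Proof. apply Hpm; reflexivity. Qed.

Lemma D_eq_H0 p q : D p q = H0 -> p = q.
Proof. apply Hpm. Qed.

Lemma D_triangle p q r : Dle (star (D p q) (D q r)) (D p r).
Proof. apply Hpm. Qed.

Lemma D_mulr p q r : D (mul p r) (mul q r) = D p q.
Proof. apply Hinv. Qed.

Lemma D_mull p q r : D (mul r p) (mul r q) = D p q.
Proof. apply Hinv. Qed.

Lemma odot_Lip1 (f g : G -> Dplus) :
  Lip1 D star f -> Lip1 D star (odot mul star f g).
Proof.
  intros Hf x y; rewrite starC.
  apply (star_odot_least _ _ _ e mulg1 Hsup); intros u z <-.
  apply Dle_trans with (star (f (mul x (inv z))) (g z)); [|apply odot_ub, mulgKV].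
  rewrite starA, (starC (g z)), <- starA; apply star_monol.
  replace (D x (mul u z)) with (D (mul x (inv z)) u).
  - rewrite starC; apply Hf.
  - rewrite <- (D_mulr (mul x (inv z)) u z), mulgKV; reflexivity.
Qed.

Lemma odot_assoc (f g h : G -> Dplus) :
  odot mul star (odot mul star f g) h = odot mul star f (odot mul star g h).
Proof.
  apply functional_extensionality; intro x; apply Dle_antisym.
  - apply (odot_assoc_le _ _ _ e mulg1 Hsup mulA starA star_monor).
  - rewrite !(odot_opp _ mul star starC).
    apply (odot_assoc_le _ _ _ e mul1g Hsup); [|exact starA|exact star_monor].
    intros; symmetry; apply mulA.
Qed.

Lemma Lip1_delta (a : G) : Lip1 D star (delta D a).
Proof. intros x y; apply D_triangle. Qed.

Lemma odot_delta_unit (f : G -> Dplus) : Lip1 D star f ->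
  odot mul star (delta D e) f = f /\ odot mul star f (delta D e) = f.
Proof.
  intro Hf; split.
  - exact (odot_delta_l _ _ _ _ _ mul1g D_mulr D_refl H0star f Hf).
  - rewrite (odot_opp _ mul star starC).
    exact (odot_delta_l _ _ _ _ _ mulg1 D_mull D_refl H0star f Hf).
Qed.

Lemma odot_deltas (a b : G) :
  delta D (mul a b) = odot mul star (delta D a) (delta D b).
Proof.
  apply functional_extensionality; intro x; unfold delta; apply Dle_antisym.
  - apply Dle_trans with (star (D (mul x (inv b)) a) (D b b)).
    + rewrite D_refl, starH0, <- (D_mulr _ a b), mulgKV; apply Dle_refl.
    + exact (odot_ub _ _ _ (delta D a) (delta D b) x _ b (mulgKV x b)).
  - apply odot_least; intros y z <-.
    rewrite <- (D_mulr y a z), <- (D_mull z b a); apply D_triangle.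
Qed.

Lemma delta_inj (a b : G) : delta D a = delta D b -> a = b.
Proof.
  intro Hab; apply D_eq_H0.
  rewrite <- (D_refl a); exact (f_equal (fun k => k a) (eq_sym Hab)).
Qed.

End MetricGroup.

Theorem theorem1 (G : Type) (mul : G -> G -> G) (inv : G -> G) (e : G)
  (D : G -> G -> Dplus) (star : Dplus -> Dplus -> Dplus)
  (Hgrp : is_group mul inv e) (Hpm : pm_space D star)
  (Hinv : invariant mul D) (Hsup : sup_continuous star) :
  (forall f g, Lip1 D star f -> Lip1 D star g -> Lip1 D star (odot mul star f g)) /\
  (forall f g h, Lip1 D star f -> Lip1 D star g -> Lip1 D star h ->
     odot mul star (odot mul star f g) h = odot mul star f (odot mul star g h)) /\
  Lip1 D star (delta D e) /\
  (forall f, Lip1 D star f ->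
     odot mul star (delta D e) f = f /\ odot mul star f (delta D e) = f) /\
  (forall a, Lip1 D star (delta D a)) /\
  (forall a b, delta D a = delta D b -> a = b) /\
  (forall a b, delta D (mul a b) = odot mul star (delta D a) (delta D b)).
Proof.
  split; [intros f g Hf _; eapply odot_Lip1; eauto|].
  split; [intros; eapply odot_assoc; eauto|].
  split; [eapply Lip1_delta; eauto|].
  split; [intros; eapply odot_delta_unit; eauto|].
  split; [eapply Lip1_delta; eauto|].
  split; [intros; eapply delta_inj; eauto|].
  intros; eapply odot_deltas; eauto.
Qed.
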